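(* Let the spot price $\pi$ have CDF $F_{\pi}$ and monotonically decreasing density $f_{\pi}$ on $[\underline{\pi},\bar{\pi}]$ with $0\le\underline{\pi}<\bar{\pi}$, and let $t_k,t_e,t_s,t_r>0$ with $t_s<t_e\le 2t_s$. Let $q_1^*$ be the optimal value of $q$ in problem (P1): minimize $\Phi_1(p,q)=q\,t_e\bar{\pi}+\frac{(1-q)t_e\int_{\underline{\pi}}^{p}x f_{\pi}(x)\,dx}{F_{\pi}(p)}$ subject to $(1-q)t_e\le \frac{t_k}{1-F_{\pi}(p)}$, $t_k\left(\frac{1}{F_{\pi}(p)}-1\right)+(1-q)t_e\le t_s$, $q t_e\le t_s$, $\underline{\pi}\le p\le\bar{\pi}$, $0\le q\le 1$. Let $q_3^*$ be the optimal value of $q$ in problem (P3): minimize $\Phi_3(p,q)=q\,t_e\bar{\pi}+\frac{(1-q)t_e}{1-\frac{t_r}{t_k}(1-F_{\pi}(p))}\cdot\frac{\int_{\underline{\pi}}^{p}x f_{\pi}(x)\,dx}{F_{\pi}(p)}$ subject to $q t_e\le t_s$, $\underline{\pi}\le p\le\bar{\pi}$, $0\le q\le 1$, $\frac{(1-q)t_e}{\left(1-\frac{t_r}{t_k}(1-F_{\pi}(p))\right)F_{\pi}(p)}\le t_s$, $t_r<\frac{t_k}{2(1-F_{\pi}(p))}$. Then $|q_1^*-q_3^*|\le \frac{t_k}{t_e}$.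
   Context: (P1) models a one-time spot request with expected deadline guarantee; (P3) models a persistent spot request with recovery time $t_r$ per resumption. In both, $q$ is the fraction of a job of execution time $t_e$ and deadline $t_s$ run on an on-demand instance at price $\bar{\pi}$, $p$ is the spot bid, and spot prices in slots of length $t_k$ are i.i.d. with CDF $F_{\pi}$ and monotonically decreasing density $f_{\pi}$ on $[\underline{\pi},\bar{\pi}]$. *)

From Stdlib Require Import Reals.
From Coquelicot Require Import Coquelicot.
Open Scope R_scope.

Definition decreasing_density (f : R -> R) (lo hi : R) : Prop :=
  (forall x, lo <= x <= hi -> 0 <= f x) /\
  (forall x y, lo <= x -> x <= y -> y <= hi -> f y <= f x) /\
  ex_RInt f lo hi /\
  RInt f lo hi = 1.

Definition cdf (f : R -> R) (lo p : R) : R := RInt f lo p.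

Definition partial_mean (f : R -> R) (lo p : R) : R := RInt (fun x => x * f x) lo p.

Definition Phi1 (f : R -> R) (lo hi te : R) (p q : R) : R :=
  q * te * hi + (1 - q) * te * partial_mean f lo p / cdf f lo p.

(* Constraints of (P1).  Conventions: tk/(1-F) = +oo when F = 1 (constraint
   vacuous); 1/F = +oo when F = 0 (constraint violated), hence 0 < F. *)
Definition P1_feasible (f : R -> R) (lo hi tk te ts : R) (p q : R) : Prop :=
  (cdf f lo p < 1 -> (1 - q) * te <= tk / (1 - cdf f lo p)) /\
  0 < cdf f lo p /\
  tk * (1 / cdf f lo p - 1) + (1 - q) * te <= ts /\
  q * te <= ts /\
  lo <= p <= hi /\
  0 <= q <= 1.

Definition P1_optimal (f : R -> R) (lo hi tk te ts : R) (p q : R) : Prop :=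
  P1_feasible f lo hi tk te ts p q /\
  forall p' q', P1_feasible f lo hi tk te ts p' q' ->
    Phi1 f lo hi te p q <= Phi1 f lo hi te p' q'.

Definition Phi3 (f : R -> R) (lo hi tk te tr : R) (p q : R) : R :=
  q * te * hi
  + (1 - q) * te / (1 - tr / tk * (1 - cdf f lo p))
    * (partial_mean f lo p / cdf f lo p).

(* Constraints of (P3).  Conventions: tk/(2(1-F)) = +oo when F = 1;
   division by F requires 0 < F. *)
Definition P3_feasible (f : R -> R) (lo hi tk te ts tr : R) (p q : R) : Prop :=
  q * te <= ts /\
  lo <= p <= hi /\
  0 <= q <= 1 /\
  0 < cdf f lo p /\
  (1 - q) * te / ((1 - tr / tk * (1 - cdf f lo p)) * cdf f lo p) <= ts /\
  (cdf f lo p < 1 -> tr < tk / (2 * (1 - cdf f lo p))).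

Definition P3_optimal (f : R -> R) (lo hi tk te ts tr : R) (p q : R) : Prop :=
  P3_feasible f lo hi tk te ts tr p q /\
  forall p' q', P3_feasible f lo hi tk te ts tr p' q' ->
    Phi3 f lo hi tk te tr p q <= Phi3 f lo hi tk te tr p' q'.

From Stdlib Require Import Reals Lra Psatz ClassicalEpsilon.
From Coquelicot Require Import Coquelicot.
Open Scope R_scope.

(* Take as reference the decision (p, q) = (hi, 1 - ts/te): bid the maximal price, so spot
   instances never fail, and run on spot for exactly the deadline ts.  It is feasible for both
   problems and costs te * hi - ts * W, where W = hi - E[pi].  With
   G(p) = int_lo^p (hi - x) f(x) dx, a decision costs te * hi minus its spot time times
   G(p) / F(p) (divided by the recovery factor in (P3)).
   In (P3) the recovery factor, the deadline constraint and G <= W force every decision at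
   least as cheap as the reference to have F(p) = 1 and spot time exactly ts.
   In (P1), a decreasing density gives G(p) <= F(p) (2 - F(p)) W, so the optimal spot time s
   satisfies ts <= s (2 - F(p)), while the failure constraint gives s (1 - F(p)) <= tk; hence
   ts - tk <= s <= ts, and q1 and q3 differ by at most tk / te. *)

Lemma ex_RInt_sub (f : R -> R) (a b c d : R) :
  a <= c -> c <= d -> d <= b -> ex_RInt f a b -> ex_RInt f c d.
Proof.
  intros Hac Hcd Hdb Hf.
  apply (ex_RInt_Chasles_2 f a); [lra|].
  apply (ex_RInt_Chasles_1 f a d b); [lra|exact Hf].
Qed.

Lemma ex_RInt_uniform_approx (h : R -> R) (a b : R) : a <= b ->
  (forall eps : posreal, exists g, ex_RInt g a b /\
     forall t, a <= t <= b -> Rabs (h t - g t) <= eps) ->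
  ex_RInt h a b.
Proof.
  intros Hab Happrox. apply ex_RInt_Reals_1. intro eps.
  set (delta := eps / 2 / (b - a + 1)).
  assert (Hdelta : 0 < delta).
  { apply Rdiv_lt_0_compat; [destruct eps; simpl; lra | lra]. }
  destruct (constructive_indefinite_description _ (Happrox (mkposreal _ Hdelta)))
    as [g [Hg Hhg]]; simpl in Hhg.
  assert (Heps2 : 0 < eps / 2) by (destruct eps; simpl; lra).
  destruct (ex_RInt_Reals_0 g a b Hg (mkposreal _ Heps2)) as [phi [psi [Hphi Hpsi]]].
  simpl in Hpsi.
  exists phi, (mkStepFun (StepFun_P28 1 psi (mkStepFun (StepFun_P4 a b delta)))).
  rewrite Rmin_left, Rmax_right in Hphi |- * by lra.
  split.
  - intros t Ht. simpl. unfold fct_cte.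
    specialize (Hphi t Ht). specialize (Hhg t Ht).
    replace (h t - phi t) with ((h t - g t) + (g t - phi t)) by ring.
    eapply Rle_trans; [apply Rabs_triang|]. lra.
  - rewrite StepFun_P30, StepFun_P18, Rmult_1_l.
    eapply Rle_lt_trans; [apply Rabs_triang|].
    rewrite (Rabs_right (_ * (b - a))) by (apply Rle_ge, Rmult_le_pos; lra).
    assert (delta * (b - a) <= eps / 2).
    { unfold delta. apply (Rmult_le_reg_r (b - a + 1)); [lra|].
      replace (eps / 2 / (b - a + 1) * (b - a) * (b - a + 1)) with (eps / 2 * (b - a))
        by (field; lra).
      apply Rmult_le_compat_l; lra. }
    lra.
Qed.

Section LipschitzProduct.

Variables (u f : R -> R) (a b K M : R).
Hypotheses (Hab : a <= b) (HK : 0 <= K) (HM : forall x, a <= x <= b -> Rabs (f x) <= M)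
  (Hu : forall x y, a <= x <= b -> a <= y <= b -> Rabs (u x - u y) <= K * Rabs (x - y))
  (Hf : ex_RInt f a b).

Let HM0 : 0 <= M.
Proof. pose proof (HM a ltac:(lra)). pose proof (Rabs_pos (f a)). lra. Qed.

(* On each mesh cell [c, c + d] the product is approximated by [u c * f]. *)
Lemma mul_lipschitz_mesh_approx (d : R) (Hd : 0 <= d) (n : nat) : forall c,
  a <= c -> c + INR n * d <= b ->
  exists g, ex_RInt g c (c + INR n * d) /\
    forall x, c <= x <= c + INR n * d -> Rabs (u x * f x - g x) <= K * d * M.
Proof.
  induction n as [|n IH]; intros c Hac Hcb.
  - change (INR 0) with 0 in *. rewrite Rmult_0_l, Rplus_0_r in *.
    exists (fun x => u x * f x). split; [apply ex_RInt_point|].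
    intros x Hx. replace (u x * f x - u x * f x) with 0 by ring. rewrite Rabs_R0.
    apply Rmult_le_pos; [apply Rmult_le_pos|]; lra.
  - rewrite S_INR in *. pose proof (pos_INR n).
    assert (Hnd : 0 <= INR n * d) by (apply Rmult_le_pos; lra).
    destruct (IH (c + d)) as [g [Hg Hgx]]; [lra|lra|].
    exists (fun x => if Rlt_dec x (c + d) then u c * f x else g x). split.
    + apply ex_RInt_Chasles_0 with (c + d); [lra| |].
      * apply ex_RInt_ext with (fun x => scal (u c) (f x)).
        { intros x Hx. rewrite Rmin_left, Rmax_right in Hx by lra.
          destruct (Rlt_dec x (c + d)); [reflexivity|lra]. }
        apply (ex_RInt_scal f), (ex_RInt_sub f a b); [lra|lra|lra|exact Hf].
      * replace (c + (INR n + 1) * d) with (c + d + INR n * d) by ring.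
        apply ex_RInt_ext with g; [|exact Hg].
        intros x Hx. rewrite Rmin_left, Rmax_right in Hx by lra.
        destruct (Rlt_dec x (c + d)); [lra|reflexivity].
    + intros x Hx. destruct (Rlt_dec x (c + d)) as [Hxd|Hxd].
      * rewrite <- Rmult_minus_distr_r, Rabs_mult.
        apply Rmult_le_compat; try apply Rabs_pos; [|apply HM; lra].
        eapply Rle_trans; [apply Hu; lra|].
        apply Rmult_le_compat_l; [lra|]. rewrite Rabs_right; lra.
      * apply Hgx; lra.
Qed.

Lemma ex_RInt_mul_lipschitz : ex_RInt (fun x => u x * f x) a b.
Proof.
  apply ex_RInt_uniform_approx; [exact Hab|]. intros [eps Heps]; simpl.
  set (C := (K * M + 1) * (b - a) + 1).
  assert (HKM : 0 <= K * M) by (apply Rmult_le_pos; lra).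
  assert (HC : 0 < C) by (unfold C; pose proof (Rmult_le_pos (K * M + 1) (b - a)); lra).
  destruct (archimed_cor1 (eps / C)) as [N [HN HN0]]; [apply Rdiv_lt_0_compat; lra|].
  apply lt_INR in HN0. simpl in HN0.
  set (d := (b - a) / INR N).
  assert (Hd : 0 <= d) by (apply Rdiv_le_0_compat; lra).
  assert (HNd : a + INR N * d = b) by (unfold d; field; lra).
  destruct (mul_lipschitz_mesh_approx d Hd N a) as [g [Hg Hgx]]; [lra|lra|].
  rewrite HNd in Hg, Hgx. exists g. split; [exact Hg|].
  intros t Ht. eapply Rle_trans; [apply Hgx; exact Ht|].
  assert (HCN : C * / INR N < eps).
  { apply (Rmult_lt_compat_l C) in HN; [|exact HC].
    replace (C * (eps / C)) with eps in HN by (field; lra). exact HN. }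
  assert (K * d * M <= C * / INR N).
  { replace (K * d * M) with (K * M * (b - a) * / INR N) by (unfold d; field; lra).
    apply Rmult_le_compat_r; [left; apply Rinv_0_lt_compat; lra|].
    unfold C. pose proof (Rmult_le_pos (K * M) (b - a)). lra. }
  lra.
Qed.

End LipschitzProduct.

Lemma is_RInt_affine (al be u v : R) :
  is_RInt (fun x => al * x + be) u v (al * (v ^ 2 - u ^ 2) / 2 + be * (v - u)).
Proof.
  replace (al * (v ^ 2 - u ^ 2) / 2 + be * (v - u))
    with (minus (al * v ^ 2 / 2 + be * v) (al * u ^ 2 / 2 + be * u))
    by (unfold minus, plus, opp; simpl; field).
  apply (is_RInt_derive (fun x => al * x ^ 2 / 2 + be * x)).
  - intros x _. auto_derive; [easy|field].
  - intros x _. apply (ex_derive_continuous (fun x => al * x + be)). auto_derive. easy.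
Qed.

Lemma RInt_lincomb (g1 g2 : R -> R) (al be u v : R) :
  ex_RInt g1 u v -> ex_RInt g2 u v ->
  RInt (fun x => al * g1 x + be * g2 x) u v = al * RInt g1 u v + be * RInt g2 u v.
Proof.
  intros H1 H2.
  rewrite (RInt_plus (fun x => scal al (g1 x)) (fun x => scal be (g2 x)));
    [|apply (ex_RInt_scal g1); exact H1|apply (ex_RInt_scal g2); exact H2].
  rewrite (RInt_scal g1), (RInt_scal g2) by assumption. reflexivity.
Qed.

Lemma RInt_Chasles_R (g : R -> R) (a b c : R) : ex_RInt g a b -> ex_RInt g b c ->
  RInt g a b + RInt g b c = RInt g a c.
Proof. intros Hab Hbc. exact (RInt_Chasles g a b c Hab Hbc). Qed.

Lemma ex_RInt_affine_mul (f : R -> R) (al be a b : R) : a <= b -> ex_RInt f a b ->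
  ex_RInt (fun x => (al * x + be) * f x) a b.
Proof.
  intros Hab Hf.
  destruct (ex_RInt_ub f a b Hf) as [M HM]. rewrite Rmin_left, Rmax_right in HM by lra.
  apply (ex_RInt_mul_lipschitz _ f a b (Rabs al) M);
    [exact Hab|apply Rabs_pos|exact HM| |exact Hf].
  intros x y _ _. rewrite <- Rabs_mult. right. f_equal. ring.
Qed.

Section DecreasingIntegrand.

Variables (f : R -> R) (a b : R).
Hypotheses (Hab : a <= b) (Hf : ex_RInt f a b)
  (Hdec : forall x y, a <= x -> x <= y -> y <= b -> f y <= f x).

Lemma RInt_decr_le : RInt f a b <= (b - a) * f a.
Proof.
  replace ((b - a) * f a) with (RInt (fun _ => f a) a b) by (rewrite RInt_const; reflexivity).
  apply RInt_le; [exact Hab|exact Hf|apply ex_RInt_const|].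
  intros x Hx. apply Hdec; lra.
Qed.

Lemma RInt_decr_mul_sub_left_ge :
  f b * (b - a) ^ 2 / 2 <= RInt (fun x => (x - a) * f x) a b.
Proof.
  assert (Hint : is_RInt (fun x => f b * x + - (f b * a)) a b (f b * (b - a) ^ 2 / 2)).
  { replace (f b * (b - a) ^ 2 / 2)
      with (f b * (b ^ 2 - a ^ 2) / 2 + - (f b * a) * (b - a)) by field.
    apply is_RInt_affine. }
  rewrite <- (is_RInt_unique _ _ _ _ Hint).
  apply RInt_le; [exact Hab|eexists; exact Hint| |].
  - apply ex_RInt_ext with (fun x => (1 * x + - a) * f x); [intros x _; simpl; ring|].
    apply ex_RInt_affine_mul; assumption.
  - intros x Hx. assert (f b <= f x) by (apply Hdec; lra). nra.
Qed.

(* Chebyshev's sum inequality for the nonincreasing functions [b - x] and [f]. *)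
Lemma RInt_decr_mul_sub_right_ge :
  (b - a) / 2 * RInt f a b <= RInt (fun x => (b - x) * f x) a b.
Proof.
  set (c := (a + b) / 2).
  assert (Hx : ex_RInt (fun x => (-1 * x + c) * f x) a b)
    by (apply ex_RInt_affine_mul; assumption).
  assert (Hmid : 0 <= RInt (fun x => (-1 * x + c) * f x) a b).
  { pose proof (is_RInt_affine (- f c) (f c * c) a b) as Hint.
    replace 0 with (- f c * (b ^ 2 - a ^ 2) / 2 + f c * c * (b - a)) by (unfold c; field).
    rewrite <- (is_RInt_unique _ _ _ _ Hint).
    apply RInt_le; [exact Hab|eexists; exact Hint|exact Hx|].
    intros x Hxab. destruct (Rle_dec x c).
    - assert (f c <= f x) by (apply Hdec; unfold c in *; lra). nra.
    - assert (f x <= f c) by (apply Hdec; unfold c in *; lra). nra. }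
  rewrite (RInt_ext (fun x => (b - x) * f x)
                    (fun x => 1 * ((-1 * x + c) * f x) + (b - c) * f x))
    by (intros x _; simpl; ring).
  rewrite RInt_lincomb by assumption. unfold c in *. lra.
Qed.

End DecreasingIntegrand.

(* With u = 1 - F the claim reads u^2 G <= (1 - u^2) X; after using the three bounds it
   reduces to 0 <= u (F d - u e)^2. *)
Lemma saving_bound_algebra (F u d e a G X : R) :
  F + u = 1 -> 0 <= F -> 0 <= u -> 0 <= d -> 0 <= e ->
  G <= (d + e) * F - a * e ^ 2 / 2 -> d * u / 2 <= X -> u <= d * a ->
  G <= F * (2 - F) * (G + X).
Proof.
  intros HFu HF Hu Hd He HG HX Hda.
  assert (HFF : F * (2 - F) = 1 - u ^ 2) by (replace F with (1 - u) by lra; ring).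
  rewrite HFF.
  destruct (Req_dec u 0) as [Hu0|Hu0].
  { subst u. nra. }
  assert (Hd0 : 0 < d) by (destruct (Req_dec d 0); [subst d; lra|lra]).
  assert (Hu1 : 0 <= 1 - u ^ 2) by nra.
  assert (Hsq : 0 <= (F * d - u * e) ^ 2) by apply pow2_ge_0.
  assert (Hae : u * e ^ 2 <= d * a * e ^ 2) by (apply Rmult_le_compat_r; [apply pow2_ge_0|lra]).
  enough (2 * d * (u ^ 2 * G) <= 2 * d * ((1 - u ^ 2) * X)) by nra.
  apply Rle_trans with (u ^ 2 * (2 * d * (d + e) * F - u * e ^ 2)).
  { assert (2 * d * G <= 2 * d * (d + e) * F - d * a * e ^ 2) by nra. nra. }
  apply Rle_trans with (d * (1 - u ^ 2) * d * u).
  { assert (Hid : d * (1 - u ^ 2) * d * u - u ^ 2 * (2 * d * (d + e) * F - u * e ^ 2)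
                 = u * (F * d - u * e) ^ 2) by (replace F with (1 - u) by lra; ring).
    pose proof (Rmult_le_pos u _ Hu Hsq). lra. }
  assert (Hc : 0 <= 2 * d * (1 - u ^ 2)) by (apply Rmult_le_pos; lra).
  pose proof (Rmult_le_compat_l _ _ _ Hc HX). lra.
Qed.

Definition spot_saving (f : R -> R) (lo hi p : R) : R :=
  hi * cdf f lo p - partial_mean f lo p.

Section DecreasingDensity.

Variables (f : R -> R) (lo hi : R).
Hypothesis Hd : decreasing_density f lo hi.

Let Hnonneg : forall x, lo <= x <= hi -> 0 <= f x := proj1 Hd.
Let Hdec : forall x y, lo <= x -> x <= y -> y <= hi -> f y <= f x := proj1 (proj2 Hd).
Let Hf : ex_RInt f lo hi := proj1 (proj2 (proj2 Hd)).
Let Hmass : RInt f lo hi = 1 := proj2 (proj2 (proj2 Hd)).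

Lemma ex_RInt_density (p q : R) : lo <= p -> p <= q -> q <= hi -> ex_RInt f p q.
Proof. intros Hp Hpq Hq. apply (ex_RInt_sub f lo hi); assumption. Qed.

Lemma ex_RInt_density_affine_mul (al be p q : R) : lo <= p -> p <= q -> q <= hi ->
  ex_RInt (fun x => (al * x + be) * f x) p q.
Proof. intros Hp Hpq Hq. apply ex_RInt_affine_mul; [|apply ex_RInt_density]; assumption. Qed.

Lemma RInt_density_affine (al be p q : R) : lo <= p -> p <= q -> q <= hi ->
  RInt (fun x => (al * x + be) * f x) p q
  = al * RInt (fun x => x * f x) p q + be * RInt f p q.
Proof.
  intros Hp Hpq Hq.
  rewrite <- RInt_lincomb; [| |apply ex_RInt_density; assumption].
  - apply RInt_ext. intros x _. simpl. ring.
  - apply ex_RInt_ext with (fun x => (1 * x + 0) * f x); [intros x _; simpl; ring|].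
    apply ex_RInt_density_affine_mul; assumption.
Qed.

Lemma spot_saving_RInt (p : R) : lo <= p <= hi ->
  spot_saving f lo hi p = RInt (fun x => (hi - x) * f x) lo p.
Proof.
  intros Hp. unfold spot_saving, cdf, partial_mean.
  rewrite (RInt_ext (fun x => (hi - x) * f x) (fun x => (-1 * x + hi) * f x))
    by (intros x _; simpl; ring).
  rewrite RInt_density_affine by lra. ring.
Qed.

Lemma ex_RInt_density_saving (p q : R) : lo <= p -> p <= q -> q <= hi ->
  ex_RInt (fun x => (hi - x) * f x) p q.
Proof.
  intros Hp Hpq Hq. apply ex_RInt_ext with (fun x => (-1 * x + hi) * f x).
  - intros x _. simpl. ring.
  - apply ex_RInt_density_affine_mul; assumption.
Qed.

Lemma cdf_add_tail (p : R) : lo <= p <= hi -> cdf f lo p + RInt f p hi = 1.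
Proof.
  intros Hp. unfold cdf. rewrite RInt_Chasles_R; [exact Hmass| |];
    apply ex_RInt_density; lra.
Qed.

Lemma RInt_density_nonneg (p q : R) : lo <= p -> p <= q -> q <= hi -> 0 <= RInt f p q.
Proof.
  intros Hp Hpq Hq. apply RInt_ge_0; [exact Hpq|apply ex_RInt_density; assumption|].
  intros x Hx. apply Hnonneg. lra.
Qed.

Lemma cdf_in_01 (p : R) : lo <= p <= hi -> 0 <= cdf f lo p <= 1.
Proof.
  intros Hp. pose proof (cdf_add_tail p Hp).
  assert (0 <= cdf f lo p) by (apply RInt_density_nonneg; lra).
  assert (0 <= RInt f p hi) by (apply RInt_density_nonneg; lra).
  lra.
Qed.

Lemma spot_saving_add_tail (p : R) : lo <= p <= hi ->
  spot_saving f lo hi p + RInt (fun x => (hi - x) * f x) p hi = spot_saving f lo hi hi.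
Proof.
  intros Hp. rewrite !spot_saving_RInt by lra.
  apply RInt_Chasles_R; apply ex_RInt_density_saving; lra.
Qed.

Lemma spot_saving_le_total (p : R) : lo <= p <= hi ->
  spot_saving f lo hi p <= spot_saving f lo hi hi.
Proof.
  intros Hp. rewrite <- (spot_saving_add_tail p Hp).
  enough (0 <= RInt (fun x => (hi - x) * f x) p hi) by lra.
  apply RInt_ge_0; [lra|apply ex_RInt_density_saving; lra|].
  intros x Hx. apply Rmult_le_pos; [lra|apply Hnonneg; lra].
Qed.

Lemma spot_saving_total_pos : lo < hi -> 0 < spot_saving f lo hi hi.
Proof.
  intros Hlt. rewrite spot_saving_RInt by lra.
  eapply Rlt_le_trans; [|apply RInt_decr_mul_sub_right_ge; [lra|exact Hf|exact Hdec]].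
  rewrite Hmass. lra.
Qed.

Lemma spot_saving_le_cdf (p : R) : lo <= p <= hi ->
  spot_saving f lo hi p
  <= cdf f lo p * (2 - cdf f lo p) * spot_saving f lo hi hi.
Proof.
  intros Hp. rewrite <- (spot_saving_add_tail p Hp).
  assert (Hdec_lo : forall x y, lo <= x -> x <= y -> y <= p -> f y <= f x)
    by (intros; apply Hdec; lra).
  assert (Hdec_hi : forall x y, p <= x -> x <= y -> y <= hi -> f y <= f x)
    by (intros; apply Hdec; lra).
  assert (Hf_lo : ex_RInt f lo p) by (apply ex_RInt_density; lra).
  assert (Hf_hi : ex_RInt f p hi) by (apply ex_RInt_density; lra).
  apply saving_bound_algebra with (u := RInt f p hi) (d := hi - p) (e := p - lo) (a := f p).
  - apply cdf_add_tail; exact Hp.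
  - apply RInt_density_nonneg; lra.
  - apply RInt_density_nonneg; lra.
  - lra.
  - lra.
  - assert (Hsplit : spot_saving f lo hi p
                     = (hi - lo) * cdf f lo p - RInt (fun x => (x - lo) * f x) lo p).
    { unfold spot_saving, cdf, partial_mean.
      rewrite (RInt_ext (fun x => (x - lo) * f x) (fun x => (1 * x + - lo) * f x))
        by (intros x _; simpl; ring).
      rewrite RInt_density_affine by lra. ring. }
    pose proof (RInt_decr_mul_sub_left_ge f lo p (proj1 Hp) Hf_lo Hdec_lo).
    replace (hi - p + (p - lo)) with (hi - lo) by ring. lra.
  - replace ((hi - p) * RInt f p hi / 2) with ((hi - p) / 2 * RInt f p hi) by field.
    apply RInt_decr_mul_sub_right_ge; [lra|exact Hf_hi|exact Hdec_hi].
  - apply RInt_decr_le; [lra|exact Hf_hi|exact Hdec_hi].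
Qed.

End DecreasingDensity.

Lemma recovery_factor_pos (tk tr F : R) : 0 < tk -> 0 < tr -> F <= 1 ->
  (F < 1 -> tr < tk / (2 * (1 - F))) -> 0 < 1 - tr / tk * (1 - F).
Proof.
  intros Htk Htr HF Hrec.
  destruct (Rlt_dec F 1) as [HF1|HF1]; [|replace F with 1 by lra; lra].
  specialize (Hrec HF1).
  apply (Rmult_lt_compat_r (2 * (1 - F))) in Hrec; [|lra].
  replace (tk / (2 * (1 - F)) * (2 * (1 - F))) with tk in Hrec by (field; lra).
  enough (Hlt : tr / tk * (1 - F) * tk < 1 * tk) by (apply Rmult_lt_reg_r in Hlt; lra).
  replace (tr / tk * (1 - F) * tk) with (tr * (1 - F)) by (field; lra). lra.
Qed.

Section SpotProblems.

Variables (f : R -> R) (lo hi tk te ts tr : R).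
Hypotheses (Hlo : 0 <= lo) (Hlh : lo < hi) (Hd : decreasing_density f lo hi)
  (Htk : 0 < tk) (Hte : 0 < te) (Hts : 0 < ts) (Hst : ts < te) (Hte2 : te <= 2 * ts).

Let W := spot_saving f lo hi hi.

Let cdf_hi : cdf f lo hi = 1 := proj2 (proj2 (proj2 Hd)).

Let q_ref := 1 - ts / te.

Let spot_time_ref : (1 - q_ref) * te = ts.
Proof. unfold q_ref. field. lra. Qed.

Let q_ref_range : 0 <= q_ref <= 1.
Proof.
  pose proof spot_time_ref.
  split; apply (Rmult_le_reg_r te); lra.
Qed.

Lemma P1_feasible_ref : P1_feasible f lo hi tk te ts hi q_ref.
Proof.
  unfold P1_feasible. rewrite cdf_hi.
  pose proof spot_time_ref. pose proof q_ref_range.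
  repeat split; lra.
Qed.

Lemma P3_feasible_ref : P3_feasible f lo hi tk te ts tr hi q_ref.
Proof.
  unfold P3_feasible. rewrite cdf_hi.
  pose proof spot_time_ref. pose proof q_ref_range.
  repeat split; try lra.
  replace ((1 - tr / tk * (1 - 1)) * 1) with 1 by (field; lra). lra.
Qed.

Lemma Phi1_ref : Phi1 f lo hi te hi q_ref = te * hi - ts * W.
Proof.
  unfold Phi1, W, spot_saving. rewrite cdf_hi, <- spot_time_ref. field.
Qed.

Lemma Phi3_ref : Phi3 f lo hi tk te tr hi q_ref = te * hi - ts * W.
Proof.
  unfold Phi3, W, spot_saving. rewrite cdf_hi, <- spot_time_ref. field. lra.
Qed.

Lemma P1_spot_time_bounds (p q : R) :
  P1_feasible f lo hi tk te ts p q -> Phi1 f lo hi te p q <= te * hi - ts * W ->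
  ts - tk <= (1 - q) * te <= ts.
Proof.
  intros [Hcap [HF [Hdead [_ [Hp Hq]]]]] Hval.
  pose proof (cdf_in_01 f lo hi Hd p Hp) as HF01.
  pose proof (spot_saving_le_cdf f lo hi Hd p Hp) as HG.
  pose proof (spot_saving_total_pos f lo hi Hd Hlh) as HW. fold W in HG, HW.
  set (F := cdf f lo p) in *. set (G := spot_saving f lo hi p) in *.
  set (s := (1 - q) * te) in *.
  assert (Hs : 0 <= s) by (apply Rmult_le_pos; lra).
  assert (Hphi : Phi1 f lo hi te p q = te * hi - s * G / F)
    by (unfold Phi1, G, spot_saving, s; fold F; field; lra).
  assert (Hsave : s * G / F <= s * (2 - F) * W).
  { apply (Rmult_le_reg_r F); [lra|].
    replace (s * G / F * F) with (s * G) by (field; lra).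
    replace (s * (2 - F) * W * F) with (s * (F * (2 - F) * W)) by ring.
    apply Rmult_le_compat_l; lra. }
  assert (Hts_le : ts <= s * (2 - F)) by (apply (Rmult_le_reg_r W); lra).
  split.
  - destruct (Rlt_dec F 1) as [HF1|HF1].
    + specialize (Hcap HF1).
      apply (Rmult_le_compat_r (1 - F)) in Hcap; [|lra].
      replace (tk / (1 - F) * (1 - F)) with tk in Hcap by (field; lra).
      lra.
    + replace F with 1 in Hts_le by lra. lra.
  - enough (0 <= tk * (1 / F - 1)) by lra.
    replace (tk * (1 / F - 1)) with (tk * (1 - F) / F) by (field; lra).
    apply Rdiv_le_0_compat; [apply Rmult_le_pos|]; lra.
Qed.

Hypothesis Htr : 0 < tr.

Lemma P3_spot_time_eq (p q : R) :
  P3_feasible f lo hi tk te ts tr p q -> Phi3 f lo hi tk te tr p q <= te * hi - ts * W ->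
  (1 - q) * te = ts.
Proof.
  intros [_ [Hp [Hq [HF [Hslack Hrec]]]]] Hval.
  pose proof (cdf_in_01 f lo hi Hd p Hp) as HF01.
  pose proof (spot_saving_le_total f lo hi Hd p Hp) as HG.
  pose proof (spot_saving_total_pos f lo hi Hd Hlh) as HW. fold W in HG, HW.
  set (F := cdf f lo p) in *. set (P := partial_mean f lo p) in *.
  set (r := tr / tk) in *. set (g := 1 - r * (1 - F)) in *.
  set (s := (1 - q) * te) in *. set (t := s / (g * F)) in *.
  assert (Hr : 0 < r) by (apply Rdiv_lt_0_compat; lra).
  assert (Hg : 0 < g) by (apply recovery_factor_pos; lra || assumption).
  assert (Ht : 0 <= t)
    by (apply Rdiv_le_0_compat; [apply Rmult_le_pos|apply Rmult_lt_0_compat]; lra).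
  set (K := g * F * hi - P).
  assert (HK : K = spot_saving f lo hi p - hi * r * F * (1 - F))
    by (unfold K, g, spot_saving; fold F P; ring).
  assert (Hphi : Phi3 f lo hi tk te tr p q = te * hi - t * K)
    by (unfold Phi3, t, K, s; fold F P; fold r g; field; split; lra).
  assert (Hpen : 0 <= hi * r * F * (1 - F)).
  { pose proof (Rmult_le_pos (hi * r) F ltac:(apply Rmult_le_pos; lra) ltac:(lra)).
    apply Rmult_le_pos; lra. }
  assert (HtK : ts * W <= t * K) by lra.
  assert (HK0 : 0 < K).
  { destruct (Rlt_le_dec 0 K) as [|HK0]; [assumption|].
    pose proof (Rmult_le_compat_l t K 0 Ht HK0).
    pose proof (Rmult_lt_0_compat ts W Hts HW). lra. }
  assert (HWK : W <= K).
  { apply (Rmult_le_reg_l ts); [exact Hts|].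
    pose proof (Rmult_le_compat_r K t ts (Rlt_le _ _ HK0) Hslack). lra. }
  assert (HF1 : F = 1).
  { destruct (Rlt_dec F 1) as [HF1|HF1]; [|lra].
    assert (0 < hi * r * F * (1 - F))
      by (apply Rmult_lt_0_compat; [apply Rmult_lt_0_compat; [apply Rmult_lt_0_compat|]|]; lra).
    lra. }
  assert (Hts_le : ts <= t).
  { apply (Rmult_le_reg_r W); [exact HW|].
    pose proof (Rmult_le_compat_l t K W Ht ltac:(lra)). lra. }
  replace t with s in * by (unfold t, g; rewrite HF1; field).
  lra.
Qed.

End SpotProblems.

Theorem lemma8 (f : R -> R) (lo hi tk te ts tr : R) :
  0 <= lo -> lo < hi ->
  decreasing_density f lo hi ->
  0 < tk -> 0 < te -> 0 < ts -> 0 < tr ->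
  ts < te -> te <= 2 * ts ->
  forall p1 q1 p3 q3 : R,
    P1_optimal f lo hi tk te ts p1 q1 ->
    P3_optimal f lo hi tk te ts tr p3 q3 ->
    Rabs (q1 - q3) <= tk / te.
Proof.
  intros Hlo Hlh Hd Htk Hte Hts Htr Hst Hte2 p1 q1 p3 q3 [Hfeas1 Hopt1] [Hfeas3 Hopt3].
  pose proof (Hopt1 _ _ (P1_feasible_ref f lo hi tk te ts Hlh Hd Hte Hts Hst Hte2)) as Hval1.
  pose proof (Hopt3 _ _ (P3_feasible_ref f lo hi tk te ts tr Hlh Hd Htk Hte Hts Hst Hte2)) as Hval3.
  rewrite (Phi1_ref f lo hi te ts Hd Hte) in Hval1.
  rewrite (Phi3_ref f lo hi tk te ts tr Hd Htk Hte) in Hval3.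
  pose proof (P1_spot_time_bounds f lo hi tk te ts Hlh Hd Htk Hte p1 q1 Hfeas1 Hval1).
  pose proof (P3_spot_time_eq f lo hi tk te ts tr Hlo Hlh Hd Htk Hte Hts Htr p3 q3 Hfeas3 Hval3).
  replace (q1 - q3) with (((1 - q3) * te - (1 - q1) * te) / te) by (field; lra).
  rewrite Rabs_div, (Rabs_right te) by lra.
  apply Rmult_le_compat_r; [left; apply Rinv_0_lt_compat; lra|].
  apply Rabs_le. lra.
Qed.
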